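(* Let $M$ be a maximal ideal of a commutative semigroup $S$. The following are equivalent: (i) $M$ is a prime ideal; (ii) $\mathrm{Sep}\,M\neq\emptyset$; (iii) the factor semigroup $S/P_M$ is a two-element monoid with a zero.
   Context: A proper ideal $I$ of $S$ (i.e. $I\neq S$) is prime if $ab\in I$ implies $a\in I$ or $b\in I$. A proper ideal $M$ is maximal if for every ideal $A$ with $M\subseteq A\subseteq S$ we have $A=M$ or $A=S$. For $A\subseteq S$: $\mathrm{Id}\,A=\{x\in S: xA\subseteq A,\ Ax\subseteq A\}$ and $\mathrm{Sep}\,A=\mathrm{Id}\,A\cap\mathrm{Id}(S\setminus A)$. For $H\subseteq S$, $a\in S$: $H\dots a=\{(x,y)\in S\times S: xay\in H\}$ and $P_H=\{(a,b)\in S\times S: H\dots a=H\dots b\}$. *)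

Set Implicit Arguments.

Section SemigroupDefs.
Variables (S : Type) (mul : S -> S -> S).

Definition is_ideal (I : S -> Prop) : Prop :=
  (exists a, I a) /\ (forall s a, I a -> I (mul s a) /\ I (mul a s)).

Definition proper (I : S -> Prop) : Prop := exists s, ~ I s.

Definition is_prime_ideal (I : S -> Prop) : Prop :=
  is_ideal I /\ proper I /\ (forall a b, I (mul a b) -> I a \/ I b).

Definition is_maximal_ideal (M : S -> Prop) : Prop :=
  is_ideal M /\ proper M /\
  forall A : S -> Prop, is_ideal A -> (forall x, M x -> A x) ->
    (forall x, A x <-> M x) \/ (forall x, A x).

Definition Id (A : S -> Prop) : S -> Prop :=
  fun x => forall a, A a -> A (mul x a) /\ A (mul a x).

Definition Sep (A : S -> Prop) : S -> Prop :=
  fun x => Id A x /\ Id (fun y => ~ A y) x.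

Definition dots (H : S -> Prop) (a : S) : S -> S -> Prop :=
  fun x y => H (mul (mul x a) y).

Definition P_ (H : S -> Prop) : S -> S -> Prop :=
  fun a b => forall x y, dots H a x y <-> dots H b x y.

(* The factor semigroup S/theta (theta a congruence, elements = theta-classes
   [s], product [a][b] = [ab]) is a two-element monoid with a zero:
   there are classes [e] <> [z] such that every class is [e] or [z],
   [e] is an identity and [z] is a zero of S/theta. *)
Definition factor_two_elem_monoid_with_zero (theta : S -> S -> Prop) : Prop :=
  exists e z : S,
    ~ theta e z /\
    (forall s, theta s e \/ theta s z) /\
    (forall s, theta (mul e s) s /\ theta (mul s e) s) /\
    (forall s, theta (mul z s) z /\ theta (mul s z) z).

End SemigroupDefs.

(** For a ∉ M the set M ∪ {a} ∪ aS is an ideal strictly above M, hence all of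
    S: every element outside M is a or a multiple of a.  This makes a single
    separating element force primeness.  For a prime M, x a y ∈ M iff one of
    x, a, y lies in M, so P_M just records membership in M and S/P_M = {1, 0}.
    Conversely, call a full when x a y ∈ M for all x, y; the full elements form
    one P_M-class containing M.  If S/P_M = {[e], [z]} with identity [e] and zero
    [z], then e is not full (else so is ez ~ z), so e ∉ M; and e y ∈ M with
    y ∉ M would make y ~ e y full, hence e ∈ {y} ∪ yS full as well. *)
From Stdlib Require Import Classical.

Set Implicit Arguments.

Section Ideal.
Variables (S : Type) (mul : S -> S -> S).
Hypothesis mul_assoc : forall a b c, mul a (mul b c) = mul (mul a b) c.
Variable M : S -> Prop.
Hypothesis HI : is_ideal mul M.

Lemma ideal_mul2 x a y : M a -> M (mul (mul x a) y).
Proof.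
  intro Ha; destruct HI as [_ Hclosed].
  apply (Hclosed y), (Hclosed x), Ha.
Qed.

Lemma Id_ideal x : Id mul M x.
Proof. intros a Ha; exact (proj2 HI x a Ha). Qed.

Lemma Sep_notin x : proper M -> Sep mul M x -> ~ M x.
Proof.
  intros [s Hs] [_ Hx] Mx.
  apply (proj1 (Hx s Hs)), (proj2 HI), Mx.
Qed.

Definition full (a : S) : Prop := forall x y, dots mul M a x y.

Lemma full_mem a : M a -> full a.
Proof. intros Ha x y; apply ideal_mul2, Ha. Qed.

Lemma full_mulr a s : full a -> full (mul a s).
Proof.
  intros Ha x y; unfold dots.
  rewrite mul_assoc, <- (mul_assoc (mul x a) s y); apply Ha.
Qed.

Lemma full_P a b : full a -> full b -> P_ mul M a b.
Proof. intros Ha Hb x y; split; intros _; [apply Hb | apply Ha]. Qed.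

Lemma P_full a b : P_ mul M a b -> full a -> full b.
Proof. intros Hab Ha x y; apply Hab, Ha. Qed.

End Ideal.

Section Prime.
Variables (S : Type) (mul : S -> S -> S) (M : S -> Prop).
Hypothesis HP : is_prime_ideal mul M.

Lemma prime_mul_iff a b : M (mul a b) <-> M a \/ M b.
Proof.
  destruct HP as [[_ Hclosed] [_ Hprime]]; split.
  - apply Hprime.
  - intros [Ha | Hb]; [apply (Hclosed b a Ha) | apply (Hclosed a b Hb)].
Qed.

Lemma prime_P_iff a b : P_ mul M a b <-> (M a <-> M b).
Proof.
  assert (Hdots : forall c x y, dots mul M c x y <-> M x \/ M c \/ M y).
  { intros c x y; unfold dots; rewrite !prime_mul_iff; tauto. }
  destruct HP as [_ [[w Hw] _]]; split.
  - intro Hab; specialize (Hab w w); rewrite !Hdots in Hab; tauto.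
  - intros Hab x y; rewrite !Hdots; tauto.
Qed.

Lemma prime_Sep w : ~ M w -> Sep mul M w.
Proof.
  intro Hw; split.
  - apply Id_ideal, (proj1 HP).
  - intros a Ha; rewrite !prime_mul_iff; tauto.
Qed.

Lemma prime_factor : factor_two_elem_monoid_with_zero mul (P_ mul M).
Proof.
  destruct HP as [[[m Hm] _] [[w Hw] _]].
  exists w, m; split; [| split; [| split]].
  - rewrite prime_P_iff; tauto.
  - intro s; rewrite !prime_P_iff; destruct (classic (M s)); tauto.
  - intro s; rewrite !prime_P_iff, !prime_mul_iff; tauto.
  - intro s; rewrite !prime_P_iff, !prime_mul_iff; tauto.
Qed.

End Prime.

Section Maximal.
Variables (S : Type) (mul : S -> S -> S).
Hypothesis mul_assoc : forall a b c, mul a (mul b c) = mul (mul a b) c.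
Hypothesis mul_comm : forall a b, mul a b = mul b a.
Variable M : S -> Prop.
Hypothesis HM : is_maximal_ideal mul M.

Lemma maximal_cover a t : ~ M a -> ~ M t -> t = a \/ exists s, t = mul a s.
Proof.
  intros Ha Ht; destruct HM as [[_ Hclosed] [_ Hmax]].
  set (A := fun y => M y \/ y = a \/ exists s, y = mul a s).
  assert (HA : is_ideal mul A).
  { split; [exists a; unfold A; auto |].
    intros s y [Hy | [-> | [s' ->]]]; unfold A.
    - destruct (Hclosed s y Hy); auto.
    - rewrite (mul_comm s a); split; right; right; exists s; reflexivity.
    - rewrite (mul_comm s), <- mul_assoc.
      split; right; right; exists (mul s' s); reflexivity. }
  destruct (Hmax A HA) as [HAM | HAS].
  - intros x Hx; left; exact Hx.
  - exfalso; apply Ha, HAM; unfold A; auto.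
  - destruct (HAS t) as [? | ?]; [contradiction | assumption].
Qed.

Lemma Sep_prime x : Sep mul M x -> is_prime_ideal mul M.
Proof.
  intro Hx; destruct HM as [HI [Hp _]].
  pose proof (Sep_notin HI Hp Hx) as Hxn.
  split; [exact HI | split; [exact Hp |]].
  intros a b Hab.
  destruct (classic (M a)) as [| Ha]; auto.
  destruct (classic (M b)) as [| Hb]; auto.
  exfalso; apply (proj1 (proj2 Hx b Hb)).
  destruct (maximal_cover Ha Hxn) as [-> | [s ->]]; [exact Hab |].
  rewrite <- mul_assoc, (mul_comm s b), mul_assoc.
  apply (proj2 HI), Hab.
Qed.

Lemma factor_Sep : factor_two_elem_monoid_with_zero mul (P_ mul M) ->
  exists x, Sep mul M x.
Proof.
  intros [e [z [Hez [_ [He _]]]]].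
  destruct HM as [HI _].
  assert (He_full : ~ full mul M e).
  { intro Fe; apply Hez, full_P; [exact Fe |].
    apply (P_full (proj1 (He z))), (full_mulr mul_assoc), Fe. }
  assert (Hen : ~ M e) by (intro; apply He_full, full_mem; assumption).
  exists e; split; [apply Id_ideal, HI |].
  assert (Hey : forall y, ~ M y -> ~ M (mul e y)).
  { intros y Hy Mey; apply He_full.
    assert (Fy : full mul M y)
      by exact (P_full (proj1 (He y)) (full_mem HI _ Mey)).
    destruct (maximal_cover Hy Hen) as [-> | [s ->]];
      [exact Fy | apply full_mulr; assumption]. }
  intros y Hy; rewrite (mul_comm y e); auto.
Qed.

End Maximal.

Theorem theorem2 (S : Type) (mul : S -> S -> S)
  (mul_assoc : forall a b c, mul a (mul b c) = mul (mul a b) c)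
  (mul_comm : forall a b, mul a b = mul b a)
  (M : S -> Prop) (HM : is_maximal_ideal mul M) :
  (is_prime_ideal mul M <-> exists x, Sep mul M x) /\
  ((exists x, Sep mul M x) <-> factor_two_elem_monoid_with_zero mul (P_ mul M)).
Proof.
  split; split.
  - intro HP; destruct (proj1 (proj2 HP)) as [w Hw].
    exists w; apply prime_Sep; assumption.
  - intros [x Hx]; exact (Sep_prime mul_assoc mul_comm HM Hx).
  - intros [x Hx]; apply prime_factor, (Sep_prime mul_assoc mul_comm HM Hx).
  - exact (factor_Sep mul_assoc mul_comm HM).
Qed.
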